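(* Let $L$ be a component of a $T^*$-colored link diagram and $b$ a basepoint on an arc of $L$ whose label $\chi(b)$ satisfies $\chi(b)\in\{\pm i,\pm j,\pm k\}\cup\{\tfrac{1\pm i\pm j\pm k}{2}\}$. Then $q(L,b)$ is an integer power of $\chi(b)$.
   Context: $T^*=\{\pm1,\pm i,\pm j,\pm k,\tfrac{\pm1\pm i\pm j\pm k}{2}\}$ is the binary tetrahedral group (unit quaternions, all sign combinations). A $T^*$-colored link diagram is an oriented diagram of a tame link $\mathcal L\subset\mathbb{R}^3$ together with a homomorphism $\phi:\pi_1(\mathbb{R}^3\setminus\mathcal L)\to T^*$, in which each arc carries the label $\phi(m_a)$ of its Wirtinger meridian (with respect to a basepoint above the projection plane and the orientation of the arc). At each crossing $c$ where a component passes under an over-arc with label $g$, with incoming under-arc label $x$ and outgoing under-arc label $x'$, the Wirtinger relation $x'=g^{\varepsilon_c}xg^{-\varepsilon_c}$ holds, $\varepsilon_c\in\{\pm1\}$ determined by the sign of the crossing. For a component $L$ with basepoint $b$ on one of its arcs: traverse $L$ from $b$ along its orientation, let $c_1,\dots,c_m$ be the successive crossings where $L$ passes under an arc whose label is not $-1$, with over-arc labels $g_1,\dots,g_m$, and define $q(L,b)=g_m^{\varepsilon_{c_m}}\cdots g_1^{\varepsilon_{c_1}}\in T^*$. *)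

From mathcomp Require Import all_boot all_order all_algebra.
Set Implicit Arguments. Unset Strict Implicit. Unset Printing Implicit Defensive.
Import Order.TTheory GRing.Theory Num.Theory.
Local Open Scope ring_scope.

(** * Quaternions with rational coordinates: (a, b, c, d) = a + b i + c j + d k *)
Definition quat := (rat * rat * rat * rat)%type.
Definition Q (a b c d : rat) : quat := (a, b, c, d).
Definition q1 (x : quat) : rat := x.1.1.1.
Definition qi (x : quat) : rat := x.1.1.2.
Definition qj (x : quat) : rat := x.1.2.
Definition qk (x : quat) : rat := x.2.

Definition qmul (x y : quat) : quat :=
  Q (q1 x * q1 y - qi x * qi y - qj x * qj y - qk x * qk y)
    (q1 x * qi y + qi x * q1 y + qj x * qk y - qk x * qj y)
    (q1 x * qj y - qi x * qk y + qj x * q1 y + qk x * qi y)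
    (q1 x * qk y + qi x * qj y - qj x * qi y + qk x * q1 y).
Definition qconj (x : quat) : quat := Q (q1 x) (- qi x) (- qj x) (- qk x).
Definition qone : quat := Q 1 0 0 0.
Definition qmone : quat := Q (-1) 0 0 0.

(** inverse of a unit quaternion is its conjugate; all elements of T* are unit *)
Definition qpow_sign (g : quat) (eps : bool) : quat := if eps then g else qconj g.

Definition qexpz (g : quat) (z : int) : quat :=
  match z with
  | Posz n => iter n (qmul g) qone
  | Negz n => iter n.+1 (qmul (qconj g)) qone
  end.

Definition signs : seq rat := [:: 1; -1].

Definition Tstar : seq quat :=
  [seq Q s 0 0 0 | s <- signs] ++ [seq Q 0 s 0 0 | s <- signs] ++
  [seq Q 0 0 s 0 | s <- signs] ++ [seq Q 0 0 0 s | s <- signs] ++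
  flatten [seq flatten [seq [seq Q (a / 2) (b / 2) (c / 2) (d / 2) | d <- signs] | c <- signs]
           | a <- signs, b <- signs].

Definition special_labels : seq quat :=
  [seq Q 0 s 0 0 | s <- signs] ++ [seq Q 0 0 s 0 | s <- signs] ++
  [seq Q 0 0 0 s | s <- signs] ++
  flatten [seq [seq Q (1 / 2) (b / 2) (c / 2) (d / 2) | d <- signs] | b <- signs, c <- signs].

(** Arcs are numbered 0 .. nArcs-1.  A crossing is
    (over-arc, incoming under-arc, outgoing under-arc, eps) where
    eps = true means epsilon_c = +1 and eps = false means epsilon_c = -1
    (epsilon_c being determined by the sign of the crossing). *)
Definition crossing := (nat * nat * nat * bool)%type.
Definition c_over (c : crossing) : nat := c.1.1.1.
Definition c_in (c : crossing) : nat := c.1.1.2.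
Definition c_out (c : crossing) : nat := c.1.2.
Definition c_eps (c : crossing) : bool := c.2.

Record diagram := Diagram { nArcs : nat; xings : seq crossing }.

Definition diagram_wf (D : diagram) : bool :=
  all (fun c => [&& (c_over c < nArcs D)%N, (c_in c < nArcs D)%N & (c_out c < nArcs D)%N]) (xings D)
  && uniq (map c_in (xings D)) && uniq (map c_out (xings D)).

Definition Tstar_coloring (D : diagram) (chi : nat -> quat) : Prop :=
  (forall a, (a < nArcs D)%N -> chi a \in Tstar) /\
  (forall c, c \in xings D ->
     chi (c_out c) = qmul (qmul (qpow_sign (chi (c_over c)) (c_eps c)) (chi (c_in c)))
                          (qpow_sign (chi (c_over c)) (~~ c_eps c))).

Fixpoint walk (a : nat) (s : seq crossing) (b : nat) : bool :=
  match s with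
  | [::] => a == b
  | c :: s' => (c_in c == a) && walk (c_out c) s' b
  end.

(** [s] is the list of successive undercrossings c_1, ..., c_m of a component L,
    traversed once along its orientation starting from a basepoint on arc [b]:
    it is a closed walk from b back to b, visiting each crossing once, and every
    crossing whose incoming under-arc lies on L belongs to s (so s is the whole
    component). *)
Definition component_traversal (D : diagram) (b : nat) (s : seq crossing) : Prop :=
  [/\ (b < nArcs D)%N, all (fun c => c \in xings D) s, uniq s, walk b s b &
      forall c, c \in xings D -> c_in c \in b :: map c_out s -> c \in s].

(** q(L, b) = g_m^{eps_m} ... g_1^{eps_1}, over undercrossings whose over-arc
    label is not -1 *)
Definition qLb (chi : nat -> quat) (s : seq crossing) : quat :=
  foldl (fun acc c => qmul (qpow_sign (chi (c_over c)) (c_eps c)) acc) qone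
        [seq c <- s | chi (c_over c) != qmone].

Lemma size_Tstar : size Tstar = 24%N. Proof. by []. Qed.
Lemma size_special : size special_labels = 14%N. Proof. by []. Qed.

From mathcomp Require Import all_boot all_order all_algebra.
From mathcomp Require Import ring.
Local Open Scope ring_scope.

(* By the Wirtinger relations, walking along L from the basepoint
   arc b to an arc a while accumulating the partial product p of the
   over-arc labels keeps the invariant  chi(a) p = p chi(b); crossings under
   an arc labelled -1 are skipped, which is harmless because -1 is central.
   After one full turn a = b, so q(L,b) lies in the centralizer of chi(b) in
   T*.  Every label of {±i, ±j, ±k, (1±i±j±k)/2} has order 4 or 6, and its
   centralizer in T* is the cyclic group it generates, which is checked by
   computation on the 24 elements of T*. *)

Lemma qmulA x y z : qmul (qmul x y) z = qmul x (qmul y z).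
Proof.
case: x => [[[a b] c] d]; case: y => [[[e f] g] h]; case: z => [[[i j] k] l].
by rewrite /qmul /Q /q1 /qi /qj /qk /=; congr (_, _, _, _); ring.
Qed.

Lemma qmul1q x : qmul qone x = x.
Proof.
case: x => [[[a b] c] d].
by rewrite /qmul /Q /q1 /qi /qj /qk /qone /=; congr (_, _, _, _); ring.
Qed.

Lemma qmulq1 x : qmul x qone = x.
Proof.
case: x => [[[a b] c] d].
by rewrite /qmul /Q /q1 /qi /qj /qk /qone /=; congr (_, _, _, _); ring.
Qed.

Lemma qpow_sign_mone e : qpow_sign qmone e = qmone.
Proof. by case: e. Qed.

Lemma conj_by_qmone x : qmul (qmul qmone x) qmone = x.
Proof.
case: x => [[[a b] c] d].
by rewrite /qmul /Q /q1 /qi /qj /qk /qmone /=; congr (_, _, _, _); ring.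
Qed.

Lemma Tstar_mul x y : x \in Tstar -> y \in Tstar -> qmul x y \in Tstar.
Proof.
have closed : all (fun x => all (fun y => qmul x y \in Tstar) Tstar) Tstar.
  by vm_compute.
by move=> Tx Ty; exact: allP (allP closed x Tx) y Ty.
Qed.

Lemma Tstar_conj g :
  g \in Tstar -> [/\ qconj g \in Tstar, qmul g (qconj g) = qone & qmul (qconj g) g = qone].
Proof.
have inv : all (fun g => [&& qconj g \in Tstar, qmul g (qconj g) == qone
                           & qmul (qconj g) g == qone]) Tstar.
  by vm_compute.
move=> Tg; case/and3P: (allP inv g Tg) => Tcg /eqP gV /eqP Vg.
exact: And3 Tcg gV Vg.
Qed.

Lemma Tstar_qpow_sign g e : g \in Tstar -> qpow_sign g e \in Tstar.
Proof. by case: e => //= /Tstar_conj[]. Qed.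

Lemma mulV_qpow_sign g e :
  g \in Tstar -> qmul (qpow_sign g (~~ e)) (qpow_sign g e) = qone.
Proof. by case/Tstar_conj => _ gV Vg; case: e. Qed.

Lemma Tstar_centralizer_special x y :
  x \in special_labels -> y \in Tstar -> qmul x y = qmul y x ->
  exists n : nat, y = qexpz x n.
Proof.
have cyclic : all (fun x => all (fun y => (qmul x y == qmul y x) ==>
                  has (fun n => y == qexpz x (Posz n)) (iota 0 6)) Tstar) special_labels.
  by vm_compute.
move=> Sx Ty /eqP xy; have /hasP[n _ /eqP ->] := implyP (allP (allP cyclic x Sx) y Ty) xy.
by exists n.
Qed.

Section Walk.

Context {D : diagram} {chi : nat -> quat}.
Hypothesis over_Tstar : forall c, c \in xings D -> chi (c_over c) \in Tstar.
Hypothesis wirtinger : forall c, c \in xings D ->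
  chi (c_out c) = qmul (qmul (qpow_sign (chi (c_over c)) (c_eps c)) (chi (c_in c)))
                       (qpow_sign (chi (c_over c)) (~~ c_eps c)).

Let step acc c := qmul (qpow_sign (chi (c_over c)) (c_eps c)) acc.
Let counted c := chi (c_over c) != qmone.

Lemma walk_product_Tstar s acc :
  {subset s <= xings D} -> acc \in Tstar -> foldl step acc (filter counted s) \in Tstar.
Proof.
elim: s acc => [|c s IH] acc //= sD Tacc.
have sD' : {subset s <= xings D} by move=> d ds; apply: sD; rewrite inE ds orbT.
case: ifP => _; apply: IH => //.
by apply: Tstar_mul => //; apply/Tstar_qpow_sign/over_Tstar/sD; rewrite inE eqxx.
Qed.

Lemma walk_product_intertwines y s a a' acc :
  walk a s a' -> {subset s <= xings D} -> qmul (chi a) acc = qmul acc y ->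
  let p := foldl step acc (filter counted s) in qmul (chi a') p = qmul p y.
Proof.
elim: s a acc => [|c s IH] a acc /=; first by move=> /eqP <-.
case/andP=> /eqP cin w sD inv.
have cD : c \in xings D by apply: sD; rewrite inE eqxx.
have sD' : {subset s <= xings D} by move=> d ds; apply: sD; rewrite inE ds orbT.
have out := wirtinger c cD; rewrite cin in out.
case: ifP => [_ | /negbFE/eqP over_mone]; apply: (IH (c_out c)) => //; rewrite out.
  by rewrite /step !qmulA -[qmul (qpow_sign _ (~~ _)) _]qmulA
             mulV_qpow_sign ?over_Tstar // qmul1q inv.
by rewrite over_mone !qpow_sign_mone conj_by_qmone.
Qed.

End Walk.

Theorem mainTheorem2 (D : diagram) (chi : nat -> quat) (b : nat) (s : seq crossing) :
  diagram_wf D ->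
  Tstar_coloring D chi ->
  component_traversal D b s ->
  chi b \in special_labels ->
  exists z : int, qLb chi s = qexpz (chi b) z.
Proof.
move=> /andP[/andP[/allP arcs_wf _] _] [labels wirtinger] [_ /allP sD _ loop _] Sb.
have over_Tstar c : c \in xings D -> chi (c_over c) \in Tstar.
  by move=> /arcs_wf/and3P[over_arc _ _]; apply: labels.
have commute : qmul (chi b) (qLb chi s) = qmul (qLb chi s) (chi b).
  apply: (walk_product_intertwines over_Tstar wirtinger (chi b) s b b qone loop sD).
  by rewrite qmulq1 qmul1q.
have Tq : qLb chi s \in Tstar.
  by apply: (walk_product_Tstar over_Tstar) => //; vm_compute.
have [n ->] := Tstar_centralizer_special (chi b) (qLb chi s) Sb Tq commute.
by exists n.
Qed.
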